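(* Let $d$, $n$ and $m$ be integers with $d\geq 3$, $n\geq 6$ and $3n-5\leq m\leq\binom{n}{2}$. For each $G\in T_{n,m}$ it holds that $\lambda_{st}^d(G)\leq n-1$, with equality if and only if $G\in T_{n,m}^u$.
   Context: All graphs are finite, simple and undirected. A two-terminal graph is a graph $G$ together with two distinguished vertices $s,t$ (the terminals). $T_{n,m}$ denotes the set of all pairwise nonisomorphic (with isomorphisms preserving the set of terminals) two-terminal graphs with $n$ vertices and $m$ edges. For a positive integer $d$, a $d$-pathset of a two-terminal graph $G$ is a spanning subgraph of $G$ containing a path of length (number of edges) at most $d$ joining $s$ and $t$; $N_i^d(G)$ is the number of $d$-pathsets of $G$ with exactly $i$ edges. For $G\in T_{n,m}$ and $i\in\{1,\ldots,m\}$, $B_i^d(G)=\binom{m}{i}-N_{m-i}^d(G)$ is the number of $i$-element edge sets $U$ of $G$ such that $G-U$ is not a $d$-pathset (i.e. contains no $s$–$t$ path of length at most $d$). $\lambda_{st}^d(G)$ is the least positive integer $j$ with $B_j^d(G)>0$. A vertex is universal if it is adjacent to all other vertices; $T_{n,m}^u$ is the set of graphs in $T_{n,m}$ in which both terminals are universal. *)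

From mathcomp Require Import all_boot.
Set Implicit Arguments. Unset Strict Implicit. Unset Printing Implicit Defensive.

(* A two-terminal graph on vertex set 'I_n is given by an edge set
   E : {set {set 'I_n}} whose elements are 2-element vertex sets (a simple
   graph), together with terminals s t : 'I_n (s <> t). *)

Definition simple_edges (n : nat) (E : {set {set 'I_n}}) : bool :=
  [forall e in E, #|e| == 2].

Definition has_short_path (n : nat) (d : nat) (F : {set {set 'I_n}})
    (s t : 'I_n) : bool :=
  [exists k : 'I_(d.+1), exists p : k.-tuple 'I_n,
     [&& uniq (s :: val p), last s (val p) == t &
         path (fun x y => [set x; y] \in F) s (val p)]].

Definition B_st (n d : nat) (E : {set {set 'I_n}}) (s t : 'I_n) (i : nat) : nat :=
  #|[set U in powerset E | (#|U| == i) && ~~ has_short_path d (E :\: U) s t]|.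

(* lambda_st^d(G): least positive j (necessarily j <= m = #|E|) with B_j > 0;
   (0 if none exists, which never happens when s != t, since B_m = 1). *)
Definition lambda_st (n d : nat) (E : {set {set 'I_n}}) (s t : 'I_n) : nat :=
  head 0 [seq j <- iota 1 #|E| | 0 < B_st d E s t j].

Definition universal (n : nat) (E : {set {set 'I_n}}) (v : 'I_n) : bool :=
  [forall w : 'I_n, (w != v) ==> ([set v; w] \in E)].

(* Deleting the edges at a terminal v destroys every s-t path, so lambda is at
   most the degree of v; this is at most n - 1, and at most n - 2 unless v is
   universal.  Conversely, if both terminals are universal, a set U of edges
   destroying all s-t paths of length at most 2 contains st and, for every
   other vertex w, one of sw and wt; choosing these edges injectively shows
   #|U| >= n - 1. *)

From mathcomp Require Import all_boot zify.

Set Implicit Arguments.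
Unset Strict Implicit.
Unset Printing Implicit Defensive.

Lemma head_filterP (T : Type) (x0 : T) (P : pred T) (r : seq T) :
  has P r -> P (head x0 [seq x <- r | P x]).
Proof. by elim: r => //= x r IHr; case: ifP => //= _; exact: IHr. Qed.

Lemma head_filter_iota_le (P : pred nat) a m j :
  P j -> a <= j < a + m -> head 0 [seq i <- iota a m | P i] <= j.
Proof.
elim: m a => [|m IHm] a Pj /andP[aj jam] /=; first by lia.
case: ifP => Pa //=; apply: IHm => //.
have ja : j != a by apply: contraFneq Pa => <-.
by apply/andP; split; lia.
Qed.

Section Degrees.
Variables (n : nat) (E : {set {set 'I_n}}).

Definition incident (v : 'I_n) := [set e in E | v \in e].

Definition neighbours (v : 'I_n) := [set w | (w != v) && ([set v; w] \in E)].

Lemma card_incident v : simple_edges E -> #|incident v| <= #|neighbours v|.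
Proof.
move=> /forall_inP simpleE.
apply: leq_trans (leq_imset_card (fun w => [set v; w]) _).
apply/subset_leq_card/subsetP => e; rewrite inE => /andP[eE ve].
have /cards2P[x [y [xy exy]]] := simpleE e eE; subst e.
apply/imsetP; case/set2P: ve => ->.
  by exists y; rewrite // inE eq_sym xy eE.
by exists x; rewrite 1?setUC // inE xy setUC eE.
Qed.

Lemma card_neighbours v : #|neighbours v| <= n.-1.
Proof.
rewrite -[n in n.-1]card_ord -(cardsC1 v); apply/subset_leq_card/subsetP => w.
by rewrite !inE => /andP[].
Qed.

Lemma card_neighbours_non_universal v :
  ~~ universal E v -> #|neighbours v| < n.-1.
Proof.
move=> nonuniv; rewrite -[n in n.-1]card_ord -(cardsC1 v); apply: proper_card.
rewrite properEneq; apply/andP; split.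
  apply: contraNneq nonuniv => eqN; apply/forallP => w; apply/implyP => wv.
  by move: (wv); rewrite -in_setC1 -eqN inE => /andP[].
by apply/subsetP => w; rewrite !inE => /andP[].
Qed.

End Degrees.

Section Terminals.
Variables (n d : nat) (s t : 'I_n).
Hypothesis neq_st : s != t.

Lemma short_path_terminal_edge (F : {set {set 'I_n}}) v :
  v \in [set s; t] -> has_short_path d F s t -> exists2 e, e \in F & v \in e.
Proof.
move=> /set2P[] -> /existsP[k /existsP[[p _] /= /and3P[_ /eqP lastp pathp]]].
  case: p lastp pathp => [|w p] /=.
    by move=> ts; move: neq_st; rewrite ts eqxx.
  by move=> _ /andP[swF _]; exists [set s; w]; rewrite ?set21.
case/lastP: p lastp pathp => [|p w] /=.
  by move=> ts; move: neq_st; rewrite ts eqxx.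
rewrite last_rcons rcons_path => -> /andP[_ wtF].
by exists [set last s p; t]; rewrite ?set22.
Qed.

Lemma short_path_edge (F : {set {set 'I_n}}) :
  1 <= d -> [set s; t] \in F -> has_short_path d F s t.
Proof.
move=> d1 stF; apply/existsP; exists (Ordinal (d1 : 1 < d.+1)).
by apply/existsP; exists [tuple t]; rewrite /= inE neq_st eqxx stF.
Qed.

Lemma short_path_two_edges (F : {set {set 'I_n}}) w :
  2 <= d -> w != s -> w != t -> [set s; w] \in F -> [set w; t] \in F ->
  has_short_path d F s t.
Proof.
move=> d2 ws wt swF wtF; apply/existsP; exists (Ordinal (d2 : 2 < d.+1)).
apply/existsP; exists [tuple w; t] => /=.
by rewrite !inE negb_or neq_st eq_sym ws wt eqxx swF wtF.
Qed.

Variable E : {set {set 'I_n}}.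

Lemma lambda_st_le_cut (U : {set {set 'I_n}}) :
  U \subset E -> 0 < #|U| -> ~~ has_short_path d (E :\: U) s t ->
  lambda_st d E s t <= #|U|.
Proof.
move=> UE U0 noPath; apply: head_filter_iota_le; last first.
  by rewrite U0 add1n ltnS subset_leq_card.
by apply/card_gt0P; exists U; rewrite inE powersetE UE eqxx noPath.
Qed.

Lemma lambda_st_cut :
  0 < #|E| -> exists2 U : {set {set 'I_n}}, U \subset E &
    #|U| = lambda_st d E s t /\ ~~ has_short_path d (E :\: U) s t.
Proof.
move=> E0.
have noPath : ~~ has_short_path d (E :\: E) s t.
  apply/negP => /(short_path_terminal_edge (set21 s t))[e].
  by rewrite setDv inE.
have /card_gt0P[U] : 0 < B_st d E s t (lambda_st d E s t).
  apply: (@head_filterP _ 0 (fun j => 0 < B_st d E s t j)).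
  apply/hasP; exists #|E|; last first.
    by apply/card_gt0P; exists E; rewrite inE powersetE subxx eqxx noPath.
  by rewrite mem_iota; lia.
rewrite inE powersetE => /and3P[UE /eqP cardU noPathU].
by exists U.
Qed.

Lemma lambda_st_le_incident v :
  v \in [set s; t] -> 0 < #|E| -> lambda_st d E s t <= maxn 1 #|incident E v|.
Proof.
move=> vst E0.
have noPath (U : {set {set 'I_n}}) :
    incident E v \subset U -> ~~ has_short_path d (E :\: U) s t.
  move=> vU; apply/negP => /(short_path_terminal_edge vst)[e].
  rewrite inE => /andP[eU eE] ve.
  by move: eU; rewrite (subsetP vU) // inE eE ve.
have incE : incident E v \subset E.
  by apply/subsetP => e; rewrite inE => /andP[].
have [inc0 | inc_gt0] := posnP #|incident E v|.
  have /card_gt0P[e eE] := E0.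
  rewrite inc0 -(cards1 e).
  apply: lambda_st_le_cut; rewrite ?sub1set ?cards1 //.
  by apply: noPath; move/cards0_eq: inc0 => ->; exact: sub0set.
by rewrite leq_max (lambda_st_le_cut incE inc_gt0 (noPath _ (subxx _))) orbT.
Qed.

(* Every vertex w <> s is sent to an edge of U inside {s, w, t} containing w:
   to sw when possible, otherwise to wt (and st itself lies in U). *)
Lemma card_cut_universal (U : {set {set 'I_n}}) :
  2 <= d -> universal E s -> universal E t -> U \subset E ->
  ~~ has_short_path d (E :\: U) s t -> n.-1 <= #|U|.
Proof.
move=> d2 /forallP univS /forallP univT UE noPath.
have stU : [set s; t] \in U.
  apply: contraNT noPath => stU; apply: short_path_edge; first by lia.
  by rewrite inE stU (implyP (univS t)) // eq_sym.
pose f w := if [set s; w] \in U then [set s; w] else [set w; t].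
have fU w : w != s -> f w \in U.
  rewrite /f => ws; case: ifP => // swU.
  have wt : w != t by apply: contraFneq swU => ->.
  apply: contraNT noPath => wtU.
  apply: (short_path_two_edges (w := w)) => //; rewrite inE ?swU ?wtU /=.
    by rewrite (implyP (univS w)).
  by rewrite setUC (implyP (univT w)) // eq_sym.
have fw w : w \in f w by rewrite /f; case: ifP; rewrite ?set21 ?set22.
have f_sub w x : x \in f w -> [|| x == s, x == t | x == w].
  by rewrite /f; case: ifP => _ /set2P[] ->; rewrite eqxx ?orbT.
have f_inj : {in [set~ s] &, injective f}.
  move=> w w'; rewrite !inE => ws w's fww'.
  have := f_sub w w'; rewrite fww' fw (negbTE w's) /=.
  case/(_ isT)/orP => [/eqP w't | /eqP -> //].
  have := f_sub w' w; rewrite -fww' fw (negbTE ws) /=.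
  case/(_ isT)/orP => [/eqP wt | /eqP -> //].
  by rewrite w't wt.
rewrite -[n in n.-1]card_ord -(cardsC1 s) -(card_in_imset f_inj).
apply/subset_leq_card/subsetP => e /imsetP[w ws ->].
by apply: fU; rewrite -in_setC1.
Qed.

End Terminals.

Theorem lemma12 (d n m : nat) (E : {set {set 'I_n}}) (s t : 'I_n) :
  3 <= d -> 6 <= n -> 3 * n - 5 <= m -> m <= 'C(n, 2) ->
  simple_edges E -> s != t -> #|E| = m ->
  lambda_st d E s t <= n - 1 /\
  (lambda_st d E s t = n - 1 <-> universal E s /\ universal E t).
Proof.
move=> d3 n6 m_ge _ simpleE neq_st cardE.
have E0 : 0 < #|E| by rewrite cardE; lia.
have le_deg v :
    v \in [set s; t] -> lambda_st d E s t <= maxn 1 #|neighbours E v|.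
  move=> vst; apply: leq_trans (lambda_st_le_incident d neq_st vst E0) _.
  by rewrite geq_max leq_maxl leq_max (card_incident _ simpleE) orbT.
have le_n1 v : v \in [set s; t] -> lambda_st d E s t <= n - 1.
  by move=> /le_deg; have := card_neighbours E v; lia.
have univ v : v \in [set s; t] -> lambda_st d E s t = n - 1 -> universal E v.
  move=> /le_deg le_v lam; apply: contraTT le_v.
  move=> /card_neighbours_non_universal.
  by rewrite lam; lia.
split; first exact: le_n1 (set21 s t).
split=> [lam | [univS univT]]; first by rewrite !univ ?set21 ?set22.
apply/eqP; rewrite eqn_leq (le_n1 s (set21 s t)) /=.
have [U UE [<- noPath]] := lambda_st_cut d neq_st E0.
by have := card_cut_universal neq_st (ltnW d3) univS univT UE noPath; lia.
Qed.
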